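(* Let $\mathbf{k}$ be a field, $\Gamma$ a $(d-1)$-dimensional simplicial complex with $n$ vertices, and $F$ a face of $\Gamma$ such that $\mathrm{lk}_\Gamma(F)$ has dimension $d'$ and $n'$ vertices. Then for every $1\le i\le n'-d'$ for which $M_i(\mathrm{lk}_\Gamma(F))$ is defined, $M_i(\mathrm{lk}_\Gamma(F))\le M_i(\Gamma)$.
   Context: A simplicial complex is a family of subsets of its vertex set closed under subsets containing all singletons. $\mathrm{lk}_\Gamma(F)=\{G\setminus F:F\subseteq G\in\Gamma\}$, regarded as a complex on its own vertex set. For a complex $\Delta$ with vertex set $V$, $M_i(\Delta)=\max\{|W|:W\subseteq V,\ \tilde H_{|W|-i-1}(\Delta[W];\mathbf{k})\ne0\}$ (the maximal degree shift of the $i$-th module in the minimal free resolution of the Stanley–Reisner ring), defined when this set is nonempty; $\Delta[W]$ is the induced subcomplex. *)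

(* Simplicial complexes as families of finite sets over a
   finite vertex type T; reduced simplicial homology over a field k defined
   literally as (cycles)/(boundaries) of the augmented oriented chain complex. *)
From HB Require Import structures.
From mathcomp Require Import all_boot all_order all_algebra.
Set Implicit Arguments. Unset Strict Implicit. Unset Printing Implicit Defensive.
Import Order.TTheory GRing.Theory Num.Theory.
Local Open Scope ring_scope.

Section Complexes.
Variable T : finType.

Definition is_complex (D : {set {set T}}) : Prop :=
  set0 \in D /\ forall s t : {set T}, s \in D -> t \subset s -> t \in D.

Definition vert (D : {set {set T}}) : {set T} := [set v | [set v] \in D].

Definition dimC (D : {set {set T}}) : int := (\max_(s in D) #|s|)%:Z - 1.

Definition induced (D : {set {set T}}) (W : {set T}) : {set {set T}} :=
  [set s in D | s \subset W].

Definition link (G : {set {set T}}) (F : {set T}) : {set {set T}} :=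
  [set s :\: F | s in G & F \subset s].

Variable k : fieldType.

(* j-chains of D: functions on faces, supported on faces of D with j+1
   vertices (j = -1 gives the augmentation degree spanned by the empty face) *)
Definition is_chain (D : {set {set T}}) (j : int) (c : {set T} -> k) : Prop :=
  forall s, c s != 0 -> (s \in D) /\ (#|s|%:Z = j + 1).

Definition bd (D : {set {set T}}) (c : {set T} -> k) (t : {set T}) : k :=
  \sum_(v in ~: t | (v |: t) \in D)
     (-1) ^+ #|[set u in t | enum_rank u < enum_rank v]%N| * c (v |: t).

(* \tilde H_j(D; k) <> 0 : there is a j-cycle that is not a j-boundary *)
Definition Hnz (D : {set {set T}}) (j : int) : Prop :=
  exists z : {set T} -> k,
    [/\ is_chain D j z, (forall t, bd D z t = 0) &
        ~ (exists b : {set T} -> k,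
             is_chain D (j + 1) b /\ forall t, bd D b t = z t)].

Definition Mwit (D : {set {set T}}) (i : nat) (W : {set T}) : Prop :=
  W \subset vert D /\ Hnz (induced D W) (#|W|%:Z - i%:Z - 1).

(* isM D i m : M_i(D) is defined and equals m *)
Definition isM (D : {set {set T}}) (i m : nat) : Prop :=
  (exists W, Mwit D i W /\ #|W| = m) /\ (forall W, Mwit D i W -> (#|W| <= m)%N).

End Complexes.

From mathcomp Require Import all_boot all_order all_algebra.
From mathcomp Require Import zify ring.
From Stdlib Require Import Classical.
Set Implicit Arguments. Unset Strict Implicit. Unset Printing Implicit Defensive.
Import Order.TTheory GRing.Theory Num.Theory.
Local Open Scope ring_scope.

(* Since lk(lk_G(F - v), v) = lk_G(F), induction on |F| reduces the claim to
   the link of a vertex v.  Let z be a j-cycle of lk(v)[W] that is not a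
   boundary there.  If z is not a boundary in G[W] either, W itself is a
   witness for M_i(G).  Otherwise z = bd b in G[W], and cone(z) - e b is a
   (j+1)-cycle of G[W + v] for a suitable sign e; if it were bd c, restricting c to the faces through
   v would make z a boundary in lk(v)[W].  Either way a witness for M_i(lk v)
   yields a witness for M_i(G) that is at least as large. *)

Lemma cards_sepU1 (T : finType) (P : pred T) x (t : {set T}) : x \notin t ->
  #|[set w in x |: t | P w]| = (P x + #|[set w in t | P w]|)%N.
Proof.
move=> xt; case Px: (P x).
  have -> : [set w in x |: t | P w] = x |: [set w in t | P w].
    by apply/setP => w; rewrite !inE; case: eqP => [->|].
  by rewrite cardsU1 inE (negbTE xt).
rewrite add0n; apply: eq_card => w; rewrite !inE.
by case: eqP => [->|]; rewrite ?Px ?(negbTE xt).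
Qed.

Section Link.
Variable T : finType.
Implicit Types (G : {set {set T}}) (F s : {set T}).

Lemma mem_link G F s :
  (s \in link G F) = [disjoint s & F] && (s :|: F \in G).
Proof.
apply/imsetP/andP => [[a] | [sF sG]].
  rewrite inE => /andP [aG Fa] ->; split.
    by rewrite disjoints_subset subsetDr.
  suff -> : a :\: F :|: F = a by [].
  apply/setP => x; rewrite !inE.
  by case: (boolP (x \in F)) => [/(subsetP Fa) ->|]; rewrite ?orbF.
exists (s :|: F); first by rewrite inE sG subsetUr.
by rewrite setDUl setDv setU0; apply/esym/setDidPl.
Qed.

Lemma disjointsU1 s v F :
  [disjoint s & v |: F] = (v \notin s) && [disjoint s & F].
Proof.
by rewrite !disjoints_subset setCU subsetI -disjoints_subset disjoint_sym disjoints1.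
Qed.

Lemma mem_link1 G v s : (s \in link G [set v]) = (v \notin s) && (v |: s \in G).
Proof. by rewrite mem_link disjoint_sym disjoints1 setUC. Qed.

Lemma link_is_complex G F : is_complex G -> F \in G -> is_complex (link G F).
Proof.
move=> [G0 Gsub] FG; split.
  by rewrite mem_link set0U FG andbT disjoints_subset sub0set.
move=> s t; rewrite !mem_link => /andP [sF sG] ts; apply/andP; split.
  exact: disjointWl sF.
by apply: Gsub sG _; apply: setSU.
Qed.

Lemma link_set0 G : link G set0 = G.
Proof. by apply/setP => s; rewrite mem_link setU0 disjoints_subset setC0 subsetT. Qed.

Lemma link_link1 G F v : v \notin F -> link (link G F) [set v] = link G (v |: F).
Proof.
move=> vF; apply/setP => s; rewrite mem_link1 !mem_link disjointsU1 setUCA setUA.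
by rewrite disjoint_sym disjointsU1 vF /= disjoint_sym andbA.
Qed.
End Link.

Section Chains.
Variables (T : finType) (k : fieldType).
Implicit Types (D : {set {set T}}) (c z : {set T} -> k) (s t : {set T}).

Definition bd_sign t (u : T) : k :=
  (-1) ^+ #|[set w in t | enum_rank w < enum_rank u]%N|.

(* [bd] without restricting the sum to faces of [D]; it agrees with [bd D] on
   chains supported in [D] ([bd_supp]), so one boundary operator serves for all
   the complexes compared below. *)
Definition bd_all c t : k := \sum_(u in ~: t) bd_sign t u * c (u |: t).

Lemma eq_bd_all c1 c2 : c1 =1 c2 -> bd_all c1 =1 bd_all c2.
Proof. by move=> c12 t; apply: eq_bigr => u _; rewrite c12. Qed.

Lemma bd_allB c1 c2 e t :
  bd_all (fun s => c1 s - e * c2 s) t = bd_all c1 t - e * bd_all c2 t.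
Proof.
rewrite /bd_all mulr_sumr -sumrB; apply: eq_bigr => u _.
by rewrite mulrBr !mulrA [e * _]mulrC.
Qed.

Lemma is_chainB D j c1 c2 e : is_chain D j c1 -> is_chain D j c2 ->
  is_chain D j (fun s => c1 s - e * c2 s).
Proof.
move=> c1D c2D s; have [c10|/c1D //] := eqVneq (c1 s) 0.
have [c20|/c2D //] := eqVneq (c2 s) 0.
by rewrite c10 c20 mulr0 subrr eqxx.
Qed.

Lemma is_chain_inducedS D (W1 W2 : {set T}) j c : W1 \subset W2 ->
  is_chain (induced D W1) j c -> is_chain (induced D W2) j c.
Proof.
move=> W12 cW s /cW []; rewrite !inE => /andP [sD sW1] cs.
by rewrite sD (subset_trans sW1 W12).
Qed.

Lemma bd_supp D c t : (forall s, c s != 0 -> s \in D) -> bd D c t = bd_all c t.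
Proof.
move=> cD; rewrite /bd /bd_all big_mkcondr; apply: eq_bigr => u _.
case: ifP => // uD; suff -> : c (u |: t) = 0 by rewrite mulr0.
by apply/eqP; apply: contraFT uD => /cD.
Qed.

Lemma HnzE D j : Hnz k D j <->
  exists z, [/\ is_chain D j z, forall t, bd_all z t = 0 &
    ~ exists b, is_chain D (j + 1) b /\ forall t, bd_all b t = z t].
Proof.
have bdE j' c : is_chain D j' c -> bd D c =1 bd_all c.
  by move=> cD t; apply: bd_supp => s /cD [].
split=> -[z [zD zcyc zbd]]; exists z; split => // [t|[b [bD bz]]].
- by rewrite -(bdE _ _ zD).
- by apply: zbd; exists b; split => // t; rewrite (bdE _ _ bD).
- by rewrite (bdE _ _ zD).
- by apply: zbd; exists b; split => // t; rewrite -(bdE _ _ bD).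
Qed.

Lemma chain_sign D j z : is_chain D j z ->
  exists e : k, forall t, (-1) ^+ #|t| * z t = e * z t.
Proof.
move=> zD; case Ej: (j + 1) => [n|n].
  exists ((-1) ^+ n) => t; have [->|/zD [_]] := eqVneq (z t) 0.
    by rewrite !mulr0.
  by rewrite Ej => -[->].
by exists 1 => t; have [->|/zD [_]] := eqVneq (z t) 0; rewrite ?mulr0 ?Ej.
Qed.
End Chains.

Section LinkChain.
Variables (T : finType) (k : fieldType) (v : T).
Implicit Types (c z : {set T} -> k) (s t : {set T}).

(* [link_chain] restricts a chain to the faces through [v], read in the link of
   [v], and [cone] inverts it on chains avoiding [v]; the sign [up_sign] is what
   makes [link_chain] commute with the boundary. *)
Definition up_sign s : k :=
  (-1) ^+ #|[set w in s | enum_rank v < enum_rank w]%N|.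

Definition link_chain c s : k := if v \in s then 0 else up_sign s * c (v |: s).

Definition cone z s : k := if v \in s then up_sign (s :\ v) * z (s :\ v) else 0.

Lemma bd_sign_setU1 s u : v \notin s ->
  bd_sign k (v |: s) u = bd_sign k s u * (-1) ^+ (enum_rank v < enum_rank u)%N.
Proof. by move=> vs; rewrite /bd_sign cards_sepU1 // exprD mulrC. Qed.

Lemma up_sign_setU1 s u : u \notin s ->
  up_sign (u |: s) = up_sign s * (-1) ^+ (enum_rank v < enum_rank u)%N.
Proof. by move=> us; rewrite /up_sign cards_sepU1 // exprD mulrC. Qed.

Lemma bd_sign_up_sign t : v \notin t -> bd_sign k t v * up_sign t = (-1) ^+ #|t|.
Proof.
move=> vt; rewrite /bd_sign /up_sign -exprD.
rewrite -(cardsID [set w | enum_rank w < enum_rank v]%N t).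
congr (_ ^+ (_ + _)); apply: eq_card => w; rewrite !inE //.
case wt: (w \in t); rewrite ?andbF ?andbT //=.
have wv : enum_rank v != enum_rank w.
  by apply: contraNneq vt => /enum_rank_inj ->.
by case: ltngtP wv => // /val_inj ->; rewrite eqxx.
Qed.

Lemma up_sign_sq s : up_sign s * up_sign s = 1.
Proof. by rewrite -expr2 sqrr_sign. Qed.

Lemma bd_all_link_chain c t : bd_all (link_chain c) t = link_chain (bd_all c) t.
Proof.
rewrite /link_chain; case: ifPn => [vt|vt].
  by rewrite /bd_all big1 // => u _; rewrite /link_chain inE vt orbT mulr0.
rewrite /bd_all (bigD1 v) /=; last by rewrite inE.
rewrite /link_chain setU11 mulr0 add0r mulr_sumr.
apply: eq_big => [u|u]; first by rewrite !inE negb_or andbC.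
move=> /andP [ut uv]; rewrite inE in ut.
rewrite !inE eq_sym (negbTE uv) (negbTE vt) /= bd_sign_setU1 // up_sign_setU1 //.
by rewrite setUCA; ring.
Qed.

Section Cone.
Variable z : {set T} -> k.
Hypothesis z_v : forall s, v \in s -> z s = 0.

Lemma link_chain_cone : link_chain (cone z) =1 z.
Proof.
move=> s; rewrite /link_chain; case: ifPn => [/z_v //|vs].
by rewrite /cone setU11 setU1K // mulrA up_sign_sq mul1r.
Qed.

Lemma bd_all_cone : (forall t, bd_all z t = 0) ->
  forall t, bd_all (cone z) t = (-1) ^+ #|t| * z t.
Proof.
move=> z_cycle t; case: (boolP (v \in t)) => vt.
  have vt' : v \notin t :\ v by rewrite !inE eqxx.
  have := bd_all_link_chain (cone z) (t :\ v).
  rewrite (eq_bd_all link_chain_cone) z_cycle /link_chain (negbTE vt') setD1K //.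
  move/esym/eqP; rewrite mulf_eq0 signr_eq0 /= z_v // mulr0 => /eqP //.
rewrite /bd_all (bigD1 v) /=; last by rewrite inE.
rewrite big1 ?addr0 => [|u /andP [_ uv]].
  by rewrite /cone setU11 setU1K // mulrA bd_sign_up_sign.
by rewrite /cone !inE eq_sym (negbTE uv) (negbTE vt) mulr0.
Qed.
End Cone.
End LinkChain.

Section VertexLink.
Variables (T : finType) (k : fieldType) (G : {set {set T}}) (v : T).
Variables (W : {set T}) (j : int) (z : {set T} -> k).
Implicit Types (s t : {set T}) (b c : {set T} -> k).
Hypotheses (G_complex : is_complex G) (vW : v \notin W).
Hypotheses (z_chain : is_chain (induced (link G [set v]) W) j z)
  (z_cycle : forall t, bd_all z t = 0).

Lemma link_cycle_supp s : z s != 0 ->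
  [/\ v \notin s, v |: s \in G, s \subset W & #|s|%:Z = j + 1].
Proof. by move=> /z_chain []; rewrite !inE mem_link1 => /andP [/andP [vs sG] sW]. Qed.

Lemma link_cycle_v s : v \in s -> z s = 0.
Proof. by move=> vs; apply/eqP; apply: contraTT vs => /link_cycle_supp []. Qed.

Lemma link_cycle_chain : is_chain (induced G W) j z.
Proof.
move=> s /link_cycle_supp [_ vsG sW zs]; rewrite inE sW andbT; split=> //.
by case: G_complex => _ Gsub; apply: Gsub vsG _; apply: subsetUr.
Qed.

Lemma cone_chain : is_chain (induced G (v |: W)) (j + 1) (cone v z).
Proof.
move=> s; rewrite /cone; case: ifPn => [vs|_]; last by rewrite eqxx.
rewrite mulf_eq0 negb_or => /andP [_ /link_cycle_supp [_ vsG sW zs]].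
rewrite setD1K // in vsG; rewrite inE vsG /= (cardsD1 v s) vs PoszD zs addrC.
by split=> //; rewrite -(setD1K vs) setUS.
Qed.

Lemma link_chain_is_chain c : is_chain (induced G (v |: W)) (j + 1 + 1) c ->
  is_chain (induced (link G [set v]) W) (j + 1) (link_chain v c).
Proof.
move=> cD s; rewrite /link_chain; case: ifPn => [_|vs]; first by rewrite eqxx.
rewrite mulf_eq0 negb_or => /andP [_ /cD []]; rewrite inE => /andP [vsG vsW].
rewrite cardsU1 vs PoszD addrC => /addIr cs.
rewrite inE mem_link1 vs vsG cs; split=> //.
apply/subsetP => x xs; have := subsetP vsW x; rewrite !inE xs orbT => /(_ isT).
by case/predU1P => // xv; move: vs; rewrite -xv xs.
Qed.

Lemma Hnz_link_vertex :
  ~ (exists b, is_chain (induced (link G [set v]) W) (j + 1) b /\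
       forall t, bd_all b t = z t) ->
  Hnz k (induced G (v |: W)) (j + 1) \/ Hnz k (induced G W) j.
Proof.
move=> z_nbd.
have [[b [bW bz]]|z_nbdW] :=
  classic (exists b, is_chain (induced G W) (j + 1) b /\ forall t, bd_all b t = z t);
  last by right; apply/HnzE; exists z; split=> //; apply: link_cycle_chain.
left; apply/HnzE; have [e ez] := chain_sign z_chain.
exists (fun s => cone v z s - e * b s); split.
- apply: is_chainB cone_chain _; exact: is_chain_inducedS (subsetUr _ _) bW.
- by move=> t; rewrite bd_allB bd_all_cone ?ez ?bz ?subrr //; apply: link_cycle_v.
move=> [c [cD cbd]]; apply: z_nbd; exists (link_chain v c); split.
  exact: link_chain_is_chain.
have bv t : b (v |: t) = 0.
  apply/eqP; apply: contraT => /bW []; rewrite inE => /andP [_ /subsetP /(_ v)].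
  by rewrite setU11 (negbTE vW) => /(_ isT).
move=> t; rewrite bd_all_link_chain /link_chain; case: ifPn => [/link_cycle_v //|vt].
by rewrite cbd /cone setU11 setU1K // bv mulr0 subr0 mulrA up_sign_sq mul1r.
Qed.
End VertexLink.

(* Classical: the witness predicate [Mwit] is not decidable, so [ex_maxnP] does
   not apply. *)
Lemma bounded_ex_max (P : nat -> Prop) (B : nat) :
  (exists n, P n) -> (forall n, P n -> (n <= B)%N) ->
  exists m, P m /\ forall n, P n -> (n <= m)%N.
Proof.
elim: B => [|B IH] [n Pn] leB.
  by exists 0%N; split=> [|m /leB //]; have := leB n Pn; rewrite leqn0 => /eqP <-.
have [PB|nPB] := classic (P B.+1); first by exists B.+1.
apply: IH; first by exists n.
move=> m Pm; have := leB m Pm; rewrite leq_eqVlt => /predU1P [eB|//].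
by move: Pm; rewrite eB.
Qed.

Section Witnesses.
Variables (T : finType) (k : fieldType).
Implicit Types (G : {set {set T}}) (F W : {set T}).

Lemma Mwit_link1 G v i W : is_complex G -> [set v] \in G ->
  Mwit k (link G [set v]) i W -> exists W', Mwit k G i W' /\ (#|W| <= #|W'|)%N.
Proof.
move=> G_complex vG [WL HW]; have [_ Gsub] := G_complex.
have vW : v \notin W.
  by apply: contraTN vG => /(subsetP WL); rewrite inE mem_link1 inE eqxx.
have WG : W \subset vert G.
  apply/subsetP => w /(subsetP WL); rewrite !inE mem_link1 => /andP [_ vwG].
  by apply: Gsub vwG _; apply: subsetUr.
have [z [zW zcyc znbd]] := (HnzE k _ _).1 HW.
case: (Hnz_link_vertex G_complex vW zW zcyc znbd) => [Hv|HW']; last by exists W.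
exists (v |: W); split; last by rewrite cardsU1 vW.
split; first by rewrite subUset sub1set inE vG.
suff -> : #|v |: W|%:Z - i%:Z - 1 = #|W|%:Z - i%:Z - 1 + 1 by [].
by rewrite cardsU1 vW PoszD; lia.
Qed.

Lemma Mwit_link G F i W : is_complex G -> F \in G ->
  Mwit k (link G F) i W -> exists W', Mwit k G i W' /\ (#|W| <= #|W'|)%N.
Proof.
have [n] := ubnP #|F|; elim: n F W => // n IH F W ltFn G_complex FG HW.
have [F0|[v vF]] := set_0Vmem F; first by exists W; rewrite -(link_set0 G) -F0.
have [_ Gsub] := G_complex.
have vF0 : v \notin F :\ v by rewrite !inE eqxx.
have F0G : F :\ v \in G by apply: Gsub FG _; apply: subsetDl.
have vL : [set v] \in link G (F :\ v).
  by rewrite mem_link disjoints1 vF0 setD1K.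
have [W1 [HW1 leW1]] : exists W1, Mwit k (link G (F :\ v)) i W1 /\ (#|W| <= #|W1|)%N.
  apply: Mwit_link1 vL _; first exact: link_is_complex.
  by rewrite link_link1 // setD1K.
have ltF0n : (#|F :\ v| < n)%N by rewrite (cardsD1 v F) vF in ltFn.
have [W2 [HW2 leW2]] := IH _ _ ltF0n G_complex F0G HW1.
by exists W2; split=> //; apply: leq_trans leW1 leW2.
Qed.

Lemma isM_exists G i W : Mwit k G i W -> exists m, isM k G i m /\ (#|W| <= m)%N.
Proof.
move=> HW; pose P m := exists W', Mwit k G i W' /\ #|W'| = m.
have [||m [Pm maxm]] := @bounded_ex_max P #|T|.
- by exists #|W|, W.
- by move=> _ [W' [_ <-]]; apply: max_card.
exists m; split; first by split=> // W' HW'; apply: maxm; exists W'.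
by apply: maxm; exists W.
Qed.
End Witnesses.

Theorem lemma4p1 (k : fieldType) (T : finType) (Gamma : {set {set T}})
  (d n : nat) (F : {set T}) (d' : int) (n' : nat) :
  is_complex Gamma ->
  dimC Gamma = d%:Z - 1 ->
  #|vert Gamma| = n ->
  F \in Gamma ->
  dimC (link Gamma F) = d' ->
  #|vert (link Gamma F)| = n' ->
  forall (i m : nat), (1 <= i)%N -> i%:Z <= n'%:Z - d' ->
    isM k (link Gamma F) i m ->
    exists m' : nat, isM k Gamma i m' /\ (m <= m')%N.
Proof.
move=> Gamma_complex _ _ FGamma _ _ i m _ _ [[W [HW <-]] _].
have [W' [HW' leWW']] := Mwit_link Gamma_complex FGamma HW.
have [m' [Mm' leW'm']] := isM_exists HW'.
by exists m'; split=> //; apply: leq_trans leWW' leW'm'.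
Qed.
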